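(* Let $\Pi$ be a ground HEX-program and $\mathbf{A}$ an interpretation. Let $\mathcal{C}$ be the partition of $A(\Pi)$ into subset-maximal strongly connected components of the graph with edge relation $\rightarrow\cup\rightarrow_e$, let $C\in\mathcal{C}$ and $\Pi_C=\{r\in\Pi\mid H(r)\cap C\neq\emptyset\}$. If $U$ is an unfounded set of $\Pi_C$ with respect to $\mathbf{A}$ such that $U\subseteq C$, then $U$ is an unfounded set of $\Pi$ with respect to $\mathbf{A}$.
   Context: Ground HEX-programs. A ground ordinary atom is $p(c_1,\dots,c_\ell)$. A ground external atom is $\&g[\vec p](\vec c)$ with input list $\vec p$ (predicate names or constants) and output constants $\vec c$. A ground HEX-program is a finite set of rules $r$: $a_1\lor\dots\lor a_k\leftarrow b_1,\dots,b_m,\mathrm{not}\,b_{m+1},\dots,\mathrm{not}\,b_n$, with ordinary ground head atoms and each $b_j$ an ordinary or external ground atom; $H(r)=\{a_1,\dots,a_k\}$, $B^+(r)=\{b_1,\dots,b_m\}$, $B^-(r)=\{b_{m+1},\dots,b_n\}$, $B(r)$ the set of body literals. $A(\Pi)$ is the set of ordinary atoms occurring in $\Pi$. Interpretations: complete consistent sets $\mathbf{A}$ of signed literals $\mathbf{T}a$/$\mathbf{F}a$. $\mathbf{A}\models a$ (ordinary) iff $\mathbf{T}a\in\mathbf{A}$; $\mathbf{A}\models\&g[\vec p](\vec c)$ iff the Boolean oracle $f_{\&g}(\mathbf{A},\vec p,\vec c)=1$; $\mathbf{A}\models\mathrm{not}\,b$ iff $\mathbf{A}\not\models b$. Unfounded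 sets: for a set $X$ of ordinary ground atoms appearing in the program $P$, $\mathbf{A}\,\dot\cup\neg.\,X=(\mathbf{A}\setminus\{\mathbf{T}a\mid a\in X\})\cup\{\mathbf{F}a\mid a\in X\}$; $X$ is an unfounded set of $P$ w.r.t. $\mathbf{A}$ iff for every $r\in P$ with $H(r)\cap X\neq\emptyset$: (i) some literal of $B(r)$ is false w.r.t. $\mathbf{A}$, or (ii) some literal of $B(r)$ is false w.r.t. $\mathbf{A}\,\dot\cup\neg.\,X$, or (iii) some atom of $H(r)\setminus X$ is true w.r.t. $\mathbf{A}$. Dependencies: $x\rightarrow y$ iff some $r\in\Pi$ has $x\in H(r)$, $y\in B^+(r)$; $x\rightarrow_e y$ iff some $r\in\Pi$ has $x\in H(r)$ and an external atom $\&g[q_1,\dots,q_n](\vec e)\in B^+(r)\cup B^-(r)$ with some $q_i$ equal to the predicate of $y$. *)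

From Stdlib Require Import List Relations.
Import ListNotations.
Set Implicit Arguments.

Section Hex.
Variables (Pred Cst Ext : Type).

Record oatom := OAtom { opred : Pred; oargs : list Cst }.

Definition input := (Pred + Cst)%type.

Record eatom := EAtom { ename : Ext; einputs : list input; eoutputs : list Cst }.

Inductive batom := BOrd (a : oatom) | BExt (e : eatom).

(* rule  a1 v ... v ak <- b1,...,bm, not b_{m+1},..., not bn *)
Record rule := Rule { H : list oatom; Bpos : list batom; Bneg : list batom }.

Definition program := list rule.

(* An interpretation (complete consistent set of signed literals) is
   represented by the set of atoms signed T; every other atom is signed F. *)
Definition interp := oatom -> Prop.

Definition oracle := Ext -> interp -> list input -> list Cst -> bool.

Variable f : oracle.

Definition sat_atom (A : interp) (b : batom) : Prop :=
  match b with
  | BOrd a => A a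
  | BExt e => f (ename e) A (einputs e) (eoutputs e) = true
  end.

Definition some_body_lit_false (A : interp) (r : rule) : Prop :=
  (exists b, In b (Bpos r) /\ ~ sat_atom A b) \/
  (exists b, In b (Bneg r) /\ sat_atom A b).

Definition batom_oatoms (b : batom) : list oatom :=
  match b with BOrd a => [a] | BExt _ => [] end.

Definition occurs (P : program) (a : oatom) : Prop :=
  exists r, In r P /\
    (In a (H r) \/
     (exists b, (In b (Bpos r) \/ In b (Bneg r)) /\ In a (batom_oatoms b))).

Definition unfalsify (A : interp) (X : oatom -> Prop) : interp :=
  fun a => A a /\ ~ X a.

Definition unfounded (P : program) (A : interp) (X : oatom -> Prop) : Prop :=
  (forall a, X a -> occurs P a) /\
  forall r, In r P -> (exists a, In a (H r) /\ X a) ->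
    some_body_lit_false A r \/
    some_body_lit_false (unfalsify A X) r \/
    (exists a, In a (H r) /\ ~ X a /\ A a).

Definition dep (P : program) (x y : oatom) : Prop :=
  exists r, In r P /\ In x (H r) /\ In (BOrd y) (Bpos r).

Definition dep_e (P : program) (x y : oatom) : Prop :=
  exists r e q, In r P /\ In x (H r) /\
    (In (BExt e) (Bpos r) \/ In (BExt e) (Bneg r)) /\
    In (inl q) (einputs e) /\ opred y = q.

Definition dep_edge (P : program) (x y : oatom) : Prop :=
  occurs P x /\ occurs P y /\ (dep P x y \/ dep_e P x y).

Definition reach (P : program) : relation oatom := clos_refl_trans _ (dep_edge P).

Definition is_scc (P : program) (C : oatom -> Prop) : Prop :=
  exists x, occurs P x /\
    forall y, C y <-> (occurs P y /\ reach P x y /\ reach P y x).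

Definition is_restriction (P : program) (C : oatom -> Prop) (PC : program) : Prop :=
  forall r, In r PC <-> (In r P /\ exists a, In a (H r) /\ C a).
End Hex.

From Stdlib Require Import List Relations.

(* Unfoundedness only constrains rules whose head meets U, and for U ⊆ C
   these are exactly the rules of Pi_C. *)

Section Restriction.
Context {Pred Cst Ext : Type} (f : oracle Pred Cst Ext).
Context {Pi PiC : program Pred Cst Ext} {C : oatom Pred Cst -> Prop}.
Hypothesis restrPiC : is_restriction Pi C PiC.

Lemma occurs_restriction {a : oatom Pred Cst} : occurs PiC a -> occurs Pi a.
Proof.
  intros [r [inPiC occ]].
  exists r; split; [apply restrPiC, inPiC | exact occ].
Qed.

Lemma in_restriction {r : rule Pred Cst Ext} {a : oatom Pred Cst} :
  In r Pi -> In a (H r) -> C a -> In r PiC.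
Proof. intros inPi inH inC; apply restrPiC; split; [exact inPi | now exists a]. Qed.

Lemma unfounded_restriction {A : interp Pred Cst} {U : oatom Pred Cst -> Prop} :
  (forall a, U a -> C a) -> unfounded f PiC A U -> unfounded f Pi A U.
Proof.
  intros UinC [occU condU]; split.
  - intros a Ua; apply occurs_restriction, occU, Ua.
  - intros r inPi [a [inH Ua]].
    apply condU; [exact (in_restriction inPi inH (UinC a Ua)) | now exists a].
Qed.

End Restriction.

Theorem proposition4 (Pred Cst Ext : Type) (f : oracle Pred Cst Ext)
  (Pi : program Pred Cst Ext) (A : interp Pred Cst)
  (C : oatom Pred Cst -> Prop) (PiC : program Pred Cst Ext)
  (U : oatom Pred Cst -> Prop) :
  is_scc Pi C ->
  is_restriction Pi C PiC ->
  unfounded f PiC A U ->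
  (forall a, U a -> C a) ->
  unfounded f Pi A U.
Proof.
  intros _ restrPiC unfU UinC.
  exact (unfounded_restriction f restrPiC UinC unfU).
Qed.
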